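(* Fix $k\in\mathbb{N}$, $q\in(0,1)$, $s=q^{-1/2}$ and $u>s$. Let $\lambda\in\mathsf{Sign}_k^+$ with $\lambda_1>\lambda_2>\dots>\lambda_k$. If $\pi\in\mathcal{P}_{\lambda/\varnothing}$ is typical, then $$\mathcal{W}(\pi)=\left(\frac{1-q}{1-su}\right)^{\binom{k+1}{2}}\left(\frac{(1-q^{-1})u}{1-su}\right)^{\binom{k}{2}}\left(\frac{u-s}{1-su}\right)^{|\lambda|-\binom{k}{2}},$$ where $|\lambda|=\lambda_1+\dots+\lambda_k$.
   Context: $\mathsf{Sign}_k^+$ is the set of $\lambda=(\lambda_1\ge\dots\ge\lambda_k)$ with $\lambda_i\in\mathbb{Z}_{\ge0}$. A vertex has type $(i_1,j_1;i_2,j_2)$ if $i_1$ (resp. $j_1$) paths enter from below (resp. the left) and $i_2$ (resp. $j_2$) leave upward (resp. right). Weights with spectral parameter $z$ ($g\in\mathbb{Z}_{\ge0}$; all other types weight $0$): $w_z(g,0;g,0)=\frac{1-sq^gz}{1-sz}$, $w_z(g+1,0;g,1)=\frac{(1-s^2q^g)z}{1-sz}$, $w_z(g,1;g,1)=\frac{z-sq^g}{1-sz}$, $w_z(g,1;g+1,0)=\frac{1-q^{g+1}}{1-sz}$. For $\lambda\in\mathsf{Sign}_k^+$, $\mathcal{P}_{\lambda/\varnothing}$ is the set of collections of up-right paths in $\mathbb{Z}_{\ge0}\times\{1,\dots,k\}$ with at most one path per horizontal edge (vertical edges may carry several), one path entering through $(-1,y)\to(0,y)$ for each $y=1,\dots,k$,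 none entering from the bottom, and paths exiting at the top through $(\lambda_i,k)\to(\lambda_i,k+1)$, $i=1,\dots,k$. For such $\pi$, $\mathcal{W}(\pi)=\prod_{(x,y)}w_u(\text{type of }(x,y))$. A path collection $\pi\in\mathcal{P}_{\lambda/\varnothing}$ (with $\lambda$ strictly decreasing) is typical if every vertex of $\pi$ has one of the types $(0,0;0,0)$, $(0,1;0,1)$, $(0,1;1,0)$, $(1,0;0,1)$. *)

From HB Require Import structures.
From mathcomp Require Import all_boot all_order all_algebra.
From mathcomp Require Import reals.
Set Implicit Arguments. Unset Strict Implicit. Unset Printing Implicit Defensive.
Import Order.TTheory GRing.Theory Num.Theory.
Local Open Scope ring_scope.

(* A path collection in Z_{>=0} x {1..k} is encoded by its edge occupations:
   V x y = number of paths on the vertical edge (x,y) -> (x,y+1)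
           (y = 0 : edge entering (x,1) from the bottom; y = k : exit at top),
   H x y = number of paths on the horizontal edge (x-1,y) -> (x,y)
           (x = 0 : the edge (-1,y) -> (0,y) entering from the left). *)

Definition vtype (V H : nat -> nat -> nat) (x y : nat) : nat * nat * nat * nat :=
  (V x y.-1, H x y, V x y, H x.+1 y).

Definition in_P (k : nat) (lam : k.-tuple nat) (V H : nat -> nat -> nat) : Prop :=
  [/\ (forall x y, (1 <= y <= k)%N -> (H x y <= 1)%N),
      (forall y, (1 <= y <= k)%N -> H 0%N y = 1%N),
      (forall x, V x 0%N = 0%N),
      (forall x y, (1 <= y <= k)%N -> (V x y.-1 + H x y = V x y + H x.+1 y)%N)
    & (forall x, V x k = count_mem x lam)].

Definition sparam (R : realType) (q : R) : R := (Num.sqrt q)^-1.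

Definition wz (R : realType) (q z : R) (t : nat * nat * nat * nat) : R :=
  let s := sparam q in
  let: (i1, j1, i2, j2) := t in
  if (j1 == 0%N) && (j2 == 0%N) && (i1 == i2) then
    (1 - s * q ^+ i1 * z) / (1 - s * z)
  else if (j1 == 0%N) && (j2 == 1%N) && (i1 == i2.+1) then
    (1 - s ^+ 2 * q ^+ i2) * z / (1 - s * z)
  else if (j1 == 1%N) && (j2 == 1%N) && (i1 == i2) then
    (z - s * q ^+ i1) / (1 - s * z)
  else if (j1 == 1%N) && (j2 == 0%N) && (i2 == i1.+1) then
    (1 - q ^+ i1.+1) / (1 - s * z)
  else 0.

(* W(pi) = product of w_u over all vertices.  All vertices (x,y) with
   x > lambda_1 are of type (0,0;0,0) (weight 1) for any pi in P, so the
   product is taken over 0 <= x <= lambda_1, 1 <= y <= k. *)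
Definition Wt (R : realType) (q u : R) (k : nat) (lam : k.-tuple nat)
    (V H : nat -> nat -> nat) : R :=
  \prod_(x < (\max_(i < k) tnth lam i).+1)
    \prod_(1 <= y < k.+1) wz q u (vtype V H x y).

Definition typical (k : nat) (V H : nat -> nat -> nat) : Prop :=
  forall x y, (1 <= y <= k)%N ->
    vtype V H x y \in [:: (0,0,0,0); (0,1,0,1); (0,1,1,0); (1,0,0,1)]%N.

From HB Require Import structures.
From mathcomp Require Import all_boot all_order all_algebra.
From mathcomp Require Import reals.
From mathcomp Require Import zify.
Set Implicit Arguments. Unset Strict Implicit. Unset Printing Implicit Defensive.
Import Order.TTheory GRing.Theory Num.Theory.
Local Open Scope ring_scope.

(* A typical vertex of type (i1,j1;i2,j2) has weight A^i2 B^i1 C^(j2-i1), where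
   A = (1-q)/(1-su), B = (1-q^-1)u/(1-su) and C = (u-s)/(1-su), so W(pi) is a
   monomial in A, B, C whose exponents count occupied edges.  Summing the
   conservation law along row y shows that the paths crossing above row y are
   those crossing below it, plus one, minus those leaving the box to the right;
   as k paths exit at the top, none leaves to the right and exactly y paths
   cross above row y, which gives the exponents binom(k+1,2) and binom(k,2).
   Summing the conservation law weighted by abscissas shows that the horizontal
   steps in rows 1..y add up to the abscissas of the paths crossing above row
   y, which is |lambda| at the top. *)

Lemma sparam_sqr (R : realType) (q : R) : 0 < q -> sparam q ^+ 2 = q^-1.
Proof. by move=> q_gt0; rewrite /sparam exprVn sqr_sqrtr // ltW. Qed.

Lemma one_sub_sparam_mul_neq0 (R : realType) (q u : R) :
  0 < q -> q < 1 -> sparam q < u -> 1 - sparam q * u != 0.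
Proof.
move=> q_gt0 q_lt1 su; rewrite subr_eq0 lt_eqF //.
have s_gt0 : 0 < sparam q by rewrite invr_gt0 sqrtr_gt0.
rewrite (@lt_le_trans _ _ (sparam q ^+ 2)) //.
  by rewrite sparam_sqr // invf_gt1.
by rewrite expr2 ler_pM2l // ltW.
Qed.

Definition typical_types : seq (nat * nat * nat * nat) :=
  [:: (0,0,0,0); (0,1,0,1); (0,1,1,0); (1,0,0,1)]%N.

Lemma typical_type_le i1 j1 i2 j2 :
  (i1, j1, i2, j2) \in typical_types -> (i1 <= j2)%N.
Proof. by rewrite !inE => /or4P [] /eqP [-> _ _ ->]. Qed.

Lemma wz_typical (R : realType) (q u : R) i1 j1 i2 j2 :
  0 < q -> q < 1 -> sparam q < u ->
  (i1, j1, i2, j2) \in typical_types ->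
  wz q u (i1, j1, i2, j2) =
    ((1 - q) / (1 - sparam q * u)) ^+ i2
    * ((1 - q^-1) * u / (1 - sparam q * u)) ^+ i1
    * ((u - sparam q) / (1 - sparam q * u)) ^+ (j2 - i1).
Proof.
move=> q_gt0 q_lt1 su; have nz := one_sub_sparam_mul_neq0 q_gt0 q_lt1 su.
rewrite !inE => /or4P [] /eqP [-> -> -> ->]; rewrite /wz /= ?sparam_sqr //.
all: by rewrite ?(expr0, expr1, mulr1, mul1r, subnn, subn0) ?divff.
Qed.

Lemma prodrXr3 (R : comPzSemiRingType) (I : Type) (r : seq I) (x y z : R)
    (f g h : I -> nat) :
  \prod_(i <- r) (x ^+ f i * y ^+ g i * z ^+ h i) =
  x ^+ (\sum_(i <- r) f i) * y ^+ (\sum_(i <- r) g i) * z ^+ (\sum_(i <- r) h i).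
Proof. by rewrite !big_split /= !prodrXr. Qed.

Lemma sum_count_mem (N : nat) (F : nat -> nat) (s : seq nat) :
  all (fun v => v < N)%N s ->
  (\sum_(0 <= x < N) F x * count_mem x s = \sum_(v <- s) F v)%N.
Proof.
elim: s => [_|a s IHs /= /andP [aN /IHs {}IHs]].
  by rewrite big_nil big1 // => x _; rewrite muln0.
rewrite big_cons -IHs; under eq_bigr do rewrite mulnDr.
rewrite big_split /= (bigD1_seq a) ?mem_index_iota ?iota_uniq //= eqxx muln1.
by rewrite big1 ?addn0 // => x /negbTE; rewrite eq_sym => ->; rewrite muln0.
Qed.

Section RowConservation.

Variables (N : nat) (below above across : nat -> nat).
Hypothesis conservation :
  forall x, (below x + across x = above x + across x.+1)%N.

Lemma row_flux :
  (\sum_(0 <= x < N) below x + across 0 =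
   \sum_(0 <= x < N) above x + across N)%N.
Proof.
have sum_cons : (\sum_(0 <= x < N) (below x + across x) =
                 \sum_(0 <= x < N) (above x + across x.+1))%N.
  by apply: eq_bigr => x _; apply: conservation.
rewrite !big_split /= in sum_cons.
have shift : (\sum_(0 <= x < N) across x + across N =
              across 0 + \sum_(0 <= x < N) across x.+1)%N.
  by rewrite -big_nat_recr //= big_nat_recl.
lia.
Qed.

Lemma row_moment :
  (\sum_(0 <= x < N) x * below x + \sum_(0 <= x < N) across x.+1 =
   \sum_(0 <= x < N) x * above x + N * across N)%N.
Proof.
have sum_cons : (\sum_(0 <= x < N) x * (below x + across x) =
                 \sum_(0 <= x < N) x * (above x + across x.+1))%N.
  by apply: eq_bigr => x _; rewrite conservation.
rewrite !(eq_bigr _ (fun x _ => mulnDr x _ _)) !big_split /= in sum_cons.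
have shift : (\sum_(0 <= x < N) x * across x + N * across N =
   \sum_(0 <= x < N) x * across x.+1 + \sum_(0 <= x < N) across x.+1)%N.
  rewrite -big_nat_recr //= big_nat_recl //= mul0n add0n -big_split /=.
  by apply: eq_bigr => x _; rewrite mulSn addnC.
lia.
Qed.

End RowConservation.

Section PathCounts.

Variables (k N : nat) (V H : nat -> nat -> nat).
Hypothesis conservation : forall x y, (1 <= y <= k)%N ->
  (V x y.-1 + H x y = V x y + H x.+1 y)%N.
Hypothesis enter_left : forall y, (1 <= y <= k)%N -> H 0%N y = 1%N.
Hypothesis enter_bottom0 : forall x, V x 0%N = 0%N.

Definition flux y := (\sum_(0 <= x < N) V x y)%N.
Definition moment y := (\sum_(0 <= x < N) x * V x y)%N.
Definition hsteps y := (\sum_(0 <= x < N) H x.+1 y)%N.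

Lemma flux_add_exits j : (j <= k)%N ->
  (flux j + \sum_(1 <= y < j.+1) H N y = j)%N.
Proof.
elim: j => [|j IHj] j_le; first by rewrite big_geq // addn0 /flux big1.
have row_j : (1 <= j.+1 <= k)%N by [].
have := row_flux N (fun x => conservation x row_j); rewrite enter_left //.
rewrite big_nat_recr //=; have := IHj (ltnW j_le); rewrite /flux; lia.
Qed.

Hypothesis flux_top : flux k = k.

Lemma no_right_exit y : (1 <= y <= k)%N -> H N y = 0%N.
Proof.
move=> /andP [y_ge1 y_le].
have /eqP : (\sum_(1 <= y < k.+1) H N y = 0)%N.
  by have := flux_add_exits (leqnn k); rewrite flux_top; lia.
rewrite sum_nat_seq_eq0 => /allP /(_ y).
by rewrite mem_index_iota y_ge1 ltnS y_le => /(_ isT) /eqP.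
Qed.

Lemma fluxE j : (j <= k)%N -> flux j = j.
Proof.
move=> j_le; rewrite -[RHS](flux_add_exits j_le) big_nat big1 ?addn0 //.
move=> y /andP [y_ge1 y_lt]; apply: no_right_exit.
by rewrite y_ge1 (leq_trans _ j_le).
Qed.

Lemma momentE j : (j <= k)%N -> moment j = (\sum_(1 <= y < j.+1) hsteps y)%N.
Proof.
elim: j => [|j IHj] j_le.
  by rewrite big_geq // /moment big1 // => x _; rewrite enter_bottom0 muln0.
have row_j : (1 <= j.+1 <= k)%N by [].
have := row_moment N (fun x => conservation x row_j).
rewrite no_right_exit // muln0 addn0 => moment_step.
by rewrite /moment -moment_step big_nat_recr //= -IHj // ltnW.
Qed.

Lemma sum_V_above :
  (\sum_(0 <= x < N) \sum_(1 <= y < k.+1) V x y = 'C(k.+1, 2))%N.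
Proof.
rewrite exchange_big /= -bin2_sum [RHS]big_ltn // add0n.
by apply: eq_big_nat => y /andP [y_ge1 y_lt]; apply: fluxE.
Qed.

Lemma sum_V_below :
  (\sum_(0 <= x < N) \sum_(1 <= y < k.+1) V x y.-1 = 'C(k, 2))%N.
Proof.
rewrite exchange_big /= big_add1 /= -bin2_sum.
by apply: eq_big_nat => y /andP [_ y_lt]; apply: fluxE; rewrite ltnW.
Qed.

Lemma sum_hsteps :
  (\sum_(0 <= x < N) \sum_(1 <= y < k.+1) H x.+1 y = moment k)%N.
Proof. by rewrite exchange_big (momentE (leqnn k)). Qed.

Lemma sum_H_sub_V :
  (forall x y, (1 <= y <= k)%N -> V x y.-1 <= H x.+1 y)%N ->
  (\sum_(0 <= x < N) \sum_(1 <= y < k.+1) (H x.+1 y - V x y.-1) =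
   moment k - 'C(k, 2))%N.
Proof.
move=> turn_le; rewrite -sum_hsteps -sum_V_below.
have -> : (\sum_(0 <= x < N) \sum_(1 <= y < k.+1) H x.+1 y =
  \sum_(0 <= x < N) \sum_(1 <= y < k.+1) (H x.+1 y - V x y.-1)
  + \sum_(0 <= x < N) \sum_(1 <= y < k.+1) V x y.-1)%N.
  rewrite -big_split /=; apply: eq_bigr => x _; rewrite -big_split /=.
  by apply: eq_big_nat => y /(turn_le x) /subnK ->.
by rewrite addnK.
Qed.

End PathCounts.

Theorem lemma3p7 (R : realType) (k : nat) (q u : R) (lam : k.-tuple nat)
    (V H : nat -> nat -> nat) :
  0 < q -> q < 1 -> sparam q < u ->
  (forall i j : 'I_k, (i < j)%N -> (tnth lam j < tnth lam i)%N) ->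
  in_P lam V H -> typical k V H ->
  let s := sparam q in
  Wt q u lam V H =
    ((1 - q) / (1 - s * u)) ^+ 'C(k.+1, 2)
    * ((1 - q^-1) * u / (1 - s * u)) ^+ 'C(k, 2)
    * ((u - s) / (1 - s * u)) ^+ ((\sum_(i < k) tnth lam i) - 'C(k, 2))%N.
Proof.
move=> q_gt0 q_lt1 su _ [_ enter_left enter_bottom0 conservation exit_top].
move=> typ s.
set N := (\max_(i < k) tnth lam i).+1.
have lam_lt : all (fun v => v < N)%N lam.
  by apply/all_tnthP => i; rewrite ltnS; apply: leq_bigmax.
have top F : (\sum_(0 <= x < N) F x * V x k = \sum_(v <- lam) F v)%N.
  by under eq_bigr do rewrite exit_top; rewrite sum_count_mem.
have flux_top : flux N V k = k.
  rewrite -[RHS](size_tuple lam) -sum1_size -top.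
  by apply: eq_bigr => x _; rewrite mul1n.
have turn_le x y : (1 <= y <= k)%N -> (V x y.-1 <= H x.+1 y)%N.
  by move=> y_in; apply/typical_type_le/(typ x y y_in).
have -> : Wt q u lam V H =
    \prod_(0 <= x < N) \prod_(1 <= y < k.+1) wz q u (vtype V H x y).
  by rewrite /Wt big_mkord.
have vertex_weight x y : (1 <= y < k.+1)%N -> wz q u (vtype V H x y) = _ :=
  fun y_in => wz_typical q_gt0 q_lt1 su (typ x y y_in).
rewrite (eq_bigr _ (fun x _ => eq_big_nat _ _ (vertex_weight x))).
under eq_bigr do rewrite prodrXr3; rewrite prodrXr3.
rewrite (sum_V_above conservation enter_left enter_bottom0 flux_top).
rewrite (sum_V_below conservation enter_left enter_bottom0 flux_top).
rewrite (sum_H_sub_V conservation enter_left enter_bottom0 flux_top) //.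
by rewrite /moment top big_tuple.
Qed.
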